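(* In the three-door Monty Hall game described in the context, let $Q$ be an arbitrary mixed strategy of Monte, with $\pi_\theta=Q(\{(\theta,d):d\neq\theta\})$ for $\theta\in\{1,2,3\}$, and let $u$ be a door with $\pi_u=\min(\pi_1,\pi_2,\pi_3)$. Then the always-switching pure strategy $u\,\mathrm{s}\,\mathrm{s}$ is Bayesian for $Q$, and its winning probability against $Q$ equals $1-\min(\pi_1,\pi_2,\pi_3)$.
   Context: Doors are numbered $1,2,3$. A pure strategy of Monte is a pair $(\theta,d)$ with $\theta\in\{1,2,3\}$ (the door hiding the prize) and $d\in\{1,2,3\}\setminus\{\theta\}$ (six strategies). A pure strategy of Conie is a triple $x\,a\,b$ with $x\in\{1,2,3\}$ and $a,b\in\{\mathrm{h},\mathrm{s}\}$ (twelve strategies). Under the profile $((\theta,d),x\,a\,b)$: Monte offers door $y=\theta$ if $x\neq\theta$ and $y=d$ if $x=\theta$; Conie's action is $a$ if $y$ is the smaller of the two doors in $\{1,2,3\}\setminus\{x\}$ and $b$ otherwise; her final choice is $z=x$ for action $\mathrm{h}$ and $z=y$ for action $\mathrm{s}$; she wins (payoff 1) iff $z=\theta$, else payoff 0. A mixed strategy is a probability distribution on pure strategies. For a mixed strategy $Q$ of Monte, a strategy of Conie is Bayesian if it maximizes Conie's winning probability against $Q$ (strategies played independently) among all mixed strategies of Conie. *)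

From HB Require Import structures.
From mathcomp Require Import all_boot all_order all_algebra.
Set Implicit Arguments. Unset Strict Implicit. Unset Printing Implicit Defensive.
Import Order.TTheory GRing.Theory Num.Theory.
Local Open Scope ring_scope.

(* Doors 1,2,3 are represented by 'I_3 (0,1,2); the order is preserved. *)
Definition door := 'I_3.

Definition monte_strat := {m : door * door | m.2 != m.1}.
Definition theta_of (m : monte_strat) : door := (val m).1.
Definition dd_of (m : monte_strat) : door := (val m).2.

Inductive action := Hold | Switch.
Definition action_eqb (a b : action) : bool :=
  match a, b with Hold, Hold | Switch, Switch => true | _, _ => false end.
Definition action_of_bool (b : bool) := if b then Switch else Hold.
Definition bool_of_action (a : action) := if a is Switch then true else false.
Lemma action_of_boolK : cancel bool_of_action action_of_bool.
Proof. by case. Qed.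
HB.instance Definition _ := Finite.copy action (can_type action_of_boolK).

Definition conie_strat := (door * action * action)%type.

Definition offered (m : monte_strat) (x : door) : door :=
  if x != theta_of m then theta_of m else dd_of m.

Definition is_smaller_other (x y : door) : bool :=
  [forall z : door, (z != x) ==> (y <= z)%N].

Definition final_choice (m : monte_strat) (c : conie_strat) : door :=
  let: (x, a, b) := c in
  let y := offered m x in
  let act := if is_smaller_other x y then a else b in
  if act is Hold then x else y.

Definition payoff {R : numDomainType} (m : monte_strat) (c : conie_strat) : R :=
  (final_choice m c == theta_of m)%:R.

Definition is_mixed {R : numDomainType} {T : finType} (p : {ffun T -> R}) : Prop :=
  (forall t, 0 <= p t) /\ \sum_t p t = 1.

Definition win_prob {R : numDomainType} (P : {ffun conie_strat -> R})
  (Q : {ffun monte_strat -> R}) : R :=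
  \sum_c \sum_m P c * Q m * payoff m c.

Definition dirac {R : numDomainType} {T : finType} (t0 : T) : {ffun T -> R} :=
  [ffun t => (t == t0)%:R].

Definition win_prob_pure {R : numDomainType} (c : conie_strat)
  (Q : {ffun monte_strat -> R}) : R := win_prob (dirac c) Q.

Definition prior {R : numDomainType} (Q : {ffun monte_strat -> R}) (th : door) : R :=
  \sum_(m | theta_of m == th) Q m.

Definition bayesian {R : numDomainType} (Q : {ffun monte_strat -> R})
  (P : {ffun conie_strat -> R}) : Prop :=
  is_mixed P /\ forall P' : {ffun conie_strat -> R}, is_mixed P' -> win_prob P' Q <= win_prob P Q.

Definition min3 {R : realDomainType} (f : door -> R) : R :=
  Num.min (f ord0) (Num.min (f (inord 1)) (f (inord 2))).

(* Every pure strategy x a b of Conie has a door on which it surely loses: the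
   smaller of the other two doors if a = h (it is offered and she holds), else
   the larger one if b = h, else x itself (switching away from the prize).  So
   against Q it wins with probability at most 1 - pi_t for some door t, hence at
   most 1 - min pi, and mixing cannot do better than the best pure strategy.
   Always switching from x loses exactly when the prize is behind x, so it wins
   with probability 1 - pi_x, which for x = u attains the bound. *)
From mathcomp Require Import all_boot all_order all_algebra.
Import Order.TTheory GRing.Theory Num.Theory.
Local Open Scope ring_scope.

Lemma is_mixed_dirac (R : numDomainType) (T : finType) (t0 : T) :
  is_mixed (dirac t0 : {ffun T -> R}).
Proof.
split=> [t|]; first by rewrite ffunE ler0n.
rewrite (bigD1 t0) //= big1 => [|t /negbTE nt]; last by rewrite ffunE nt.
by rewrite ffunE eqxx addr0.
Qed.

Lemma mixed_sum_le (R : numDomainType) (T : finType) (P : {ffun T -> R})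
    (f : T -> R) (M : R) :
  is_mixed P -> (forall t, f t <= M) -> \sum_t P t * f t <= M.
Proof.
case=> P_ge0 P_sum1 f_le; apply: (@le_trans _ _ (\sum_t P t * M)).
  by apply: ler_sum => t _; apply: ler_wpM2l.
by rewrite -mulr_suml P_sum1 mul1r.
Qed.

Lemma win_prob_pureE (R : numDomainType) (c : conie_strat)
    (Q : {ffun monte_strat -> R}) :
  win_prob_pure c Q = \sum_m Q m * payoff m c.
Proof.
rewrite /win_prob_pure /win_prob (bigD1 c) //= [X in _ + X]big1 => [|c' /negbTE nc].
  by rewrite addr0; apply: eq_bigr => m _; rewrite ffunE eqxx mul1r.
by rewrite big1 // => m _; rewrite ffunE nc !mul0r.
Qed.

Lemma win_prob_mix (R : numDomainType) (P : {ffun conie_strat -> R})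
    (Q : {ffun monte_strat -> R}) :
  win_prob P Q = \sum_c P c * win_prob_pure c Q.
Proof.
apply: eq_bigr => c _; rewrite win_prob_pureE mulr_sumr.
by apply: eq_bigr => m _; rewrite mulrA.
Qed.

Lemma prior_compl (R : numDomainType) (Q : {ffun monte_strat -> R}) (t : door) :
  is_mixed Q -> \sum_m Q m * (theta_of m != t)%:R = 1 - prior Q t.
Proof.
case=> _ Q_sum1; rewrite -[X in X - _]Q_sum1 /prior.
rewrite [in RHS](bigID (fun m => theta_of m == t)) /= addrC addrK.
rewrite (bigID (fun m => theta_of m == t)) /= big1 ?add0r => [|m ->]; last by rewrite mulr0.
by apply: eq_bigr => m ->; rewrite mulr1.
Qed.

Lemma min3_le (R : realDomainType) (f : door -> R) (t : door) : min3 f <= f t.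
Proof.
have [->|[->|->]] : t = ord0 \/ t = inord 1 \/ t = inord 2.
- case: t => -[|[|[|//]]] Ht; [left|right; left|right; right];
    by apply: val_inj; rewrite /= ?inordK.
all: by rewrite /min3 !ge_min lexx ?orbT.
Qed.

Lemma offered_eq_theta (m : monte_strat) (x : door) :
  (offered m x == theta_of m) = (x != theta_of m).
Proof. by rewrite /offered; case: ifP => _; [rewrite eqxx|apply: negbTE (valP m)]. Qed.

Lemma final_choice_switch (m : monte_strat) (x : door) :
  (final_choice m (x, Switch, Switch) == theta_of m) = (theta_of m != x).
Proof. by rewrite /final_choice if_same offered_eq_theta eq_sym. Qed.

Definition low_other (x : door) : door := if val x == 0%N then inord 1 else inord 0.
Definition high_other (x : door) : door := if val x == 2%N then inord 1 else inord 2.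

Lemma low_other_neq (x : door) : low_other x != x.
Proof. by rewrite -val_eqE /low_other; case: x => -[|[|[|//]]] Hx; rewrite /= ?inordK. Qed.

Lemma high_other_neq (x : door) : high_other x != x.
Proof. by rewrite -val_eqE /high_other; case: x => -[|[|[|//]]] Hx; rewrite /= ?inordK. Qed.

Lemma is_smaller_low_other (x : door) : is_smaller_other x (low_other x).
Proof.
rewrite /low_other; case: x => -[|[|[|//]]] Hx /=; apply/forallP => -[[|[|[|//]]] Hz];
  by rewrite /= ?inordK // -val_eqE.
Qed.

Lemma is_smaller_high_otherN (x : door) : ~~ is_smaller_other x (high_other x).
Proof.
rewrite /high_other; case: x => -[|[|[|//]]] Hx /=; apply/forallPn;
  [exists (inord 1)|exists ord0|exists ord0];
  by rewrite -val_eqE /= ?inordK.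
Qed.

Definition losing_door (c : conie_strat) : door :=
  let: (x, a, b) := c in
  if a is Hold then low_other x else if b is Hold then high_other x else x.

Lemma offered_other (m : monte_strat) (x : door) :
  theta_of m != x -> offered m x = theta_of m.
Proof. by rewrite /offered eq_sym => ->. Qed.

Lemma final_choice_losing (m : monte_strat) (c : conie_strat) :
  theta_of m = losing_door c -> final_choice m c != theta_of m.
Proof.
case: c => [[x a] b]; rewrite /final_choice /=.
case: a; [|case: b] => th_lose.
- have th_x : theta_of m != x by rewrite th_lose low_other_neq.
  by rewrite offered_other // th_lose is_smaller_low_other -th_lose eq_sym.
- have th_x : theta_of m != x by rewrite th_lose high_other_neq.
  by rewrite offered_other // th_lose (negbTE (is_smaller_high_otherN x)) -th_lose eq_sym.
- by rewrite if_same offered_eq_theta th_lose eqxx.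
Qed.

Lemma payoff_le_losing (R : numDomainType) (m : monte_strat) (c : conie_strat) :
  payoff m c <= (theta_of m != losing_door c)%:R :> R.
Proof.
rewrite /payoff; have [th_lose|_] := eqVneq (theta_of m) (losing_door c).
  by rewrite (negbTE (final_choice_losing _ _ th_lose)).
by rewrite ler_nat leq_b1.
Qed.

Lemma win_prob_pure_le (R : realDomainType) (Q : {ffun monte_strat -> R})
    (c : conie_strat) :
  is_mixed Q -> win_prob_pure c Q <= 1 - min3 (prior Q).
Proof.
move=> Q_mixed; apply: (@le_trans _ _ (1 - prior Q (losing_door c))); last first.
  by rewrite lerB // min3_le.
rewrite win_prob_pureE -prior_compl //; apply: ler_sum => m _.
by apply: ler_wpM2l; [case: Q_mixed|apply: payoff_le_losing].
Qed.

Lemma win_prob_switch (R : numDomainType) (Q : {ffun monte_strat -> R}) (x : door) :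
  is_mixed Q -> win_prob_pure (x, Switch, Switch) Q = 1 - prior Q x.
Proof.
move=> Q_mixed; rewrite win_prob_pureE -prior_compl //.
by apply: eq_bigr => m _; rewrite /payoff final_choice_switch.
Qed.

Theorem mainTheorem5 (R : realFieldType) (Q : {ffun monte_strat -> R}) (u : door) :
  is_mixed Q ->
  prior Q u = min3 (prior Q) ->
  bayesian Q (dirac (u, Switch, Switch)) /\
  win_prob (dirac (u, Switch, Switch)) Q = 1 - min3 (prior Q).
Proof.
move=> Q_mixed u_min.
have win_u : win_prob (dirac (u, Switch, Switch)) Q = 1 - min3 (prior Q).
  by rewrite -u_min -win_prob_switch.
split=> //; split; first exact: is_mixed_dirac.
move=> P P_mixed; rewrite win_u win_prob_mix.
by apply: mixed_sum_le => // c; apply: win_prob_pure_le.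
Qed.
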